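(* Let $p$ be an odd prime and let $(G,H,T)$ be the envelope of a right conjugacy closed loop of order $2p$. Let $K$ be a subgroup with $H\lneq K\lneq G$, $|G:K|=2$ and $|K:H|=p$, and put $K_1=\langle T\cap K\rangle$, $H_1=H\cap K_1$. Then $|H_1|\in\{1,p\}$ and $K_1$ is elementary abelian of order $p$ or $p^2$.
   Context: For a finite loop $\mathcal{L}$ with identity $e$: $G=\langle R_a\mid a\in\mathcal L\rangle$ with $R_a\colon x\mapsto xa$, $H$ the stabilizer of $e$ in $G$, $T=\{R_a\}$; $(G,H,T)$ is the envelope; the loop is right conjugacy closed if $T$ is a union of conjugacy classes of $G$. *)

From mathcomp Require Import all_boot all_fingroup all_solvable.
Set Implicit Arguments. Unset Strict Implicit. Unset Printing Implicit Defensive.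
Import GroupScope.

(* A finite loop (L, op) with identity e: two-sided identity and unique
   left/right division (on a finite set, injectivity of the translations is
   equivalent to bijectivity). *)
Definition is_loop (L : finType) (op : L -> L -> L) (e : L) : Prop :=
  [/\ forall x, op e x = x /\ op x e = x,
      forall a, injective (op a)
    & forall a, injective (fun x => op x a)].

Definition rmult_set (L : finType) (op : L -> L -> L) : {set {perm L}} :=
  [set s : {perm L} | [exists a : L, [forall x : L, s x == op x a]]].

Definition env_group (L : finType) (op : L -> L -> L) : {group {perm L}} :=
  <<rmult_set op>>%G.

Definition env_stab (L : finType) (op : L -> L -> L) (e : L) : {group {perm L}} :=
  ('C_(env_group op)[e | 'P])%G.

Definition rcc (L : finType) (op : L -> L -> L) : Prop :=
  forall t, t \in rmult_set op -> t ^: env_group op \subset rmult_set op.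

From mathcomp Require Import all_boot all_fingroup all_solvable.
Import GroupScope.
Set Implicit Arguments. Unset Strict Implicit. Unset Printing Implicit Defensive.

(* K has index 2 in G, hence is normal; its orbit O of e has p points and its
   other orbit is ~: O, the image of O under a right multiplication.  The set
   S = T :&: K contains 1, is closed under conjugation by K (the loop is RCC),
   has at most p elements (s |-> s e injects it into O), and its nontrivial
   elements move every point.  Let X be the group induced by K on one of the
   two orbits: p divides #|X| and the nontrivial images of S form a union of
   X-classes of size < p.  So each of them centralises an element of order p
   of X, a p-cycle, whose centraliser in Sym(O) is the cyclic group it
   generates; hence 'C_X[s] = <[s]> is a Sylow p-subgroup of X, and it is the
   only one because the number of Sylow subgroups divides #|s ^: X| < p.
   Thus <<S>> induces a group of order p on each orbit, so it embeds in
   C_p x C_p; and as <<S>> is transitive on O, #|<<S>>| = p * #|H1|. *)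

Lemma pnat_le_prime p n : prime p -> p.-nat n -> n <= p -> n = 1%N \/ n = p.
Proof.
move=> p_pr /p_natP [[|[|k]] ->]; [by left | by right; rewrite expn1 | ].
by rewrite leqNgt -[X in X < _]expn1 ltn_exp2l ?(prime_gt1 p_pr).
Qed.

Section PrimeCycle.
Variables (T : finType) (O : {set T}) (p : nat).
Hypotheses (p_pr : prime p) (card_O : #|O| = p).

Lemma perm_moved (s : {perm T}) : s != 1 -> exists x, s x != x.
Proof.
move=> s_nt; apply/existsP; apply: contraR s_nt => /existsPn s_fix.
by apply/eqP/permP=> x; rewrite perm1; apply/eqP/negPn.
Qed.

Lemma perm_on_cycle (c h : {perm T}) : perm_on O c -> h \in <[c]> -> perm_on O h.
Proof.
move=> onc hc; have sub_Sym : <[c]> \subset perm.Sym O by rewrite cycle_subG inE.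
by have := subsetP sub_Sym h hc; rewrite inE.
Qed.

Lemma orbit_prime_cycle (c : {perm T}) x :
  perm_on O c -> #[c] = p -> c x != x -> orbit 'P <[c]> x = O.
Proof.
move=> onc oc cx.
have Ox : x \in O by apply: contraR cx => /(out_perm onc) ->.
have sub_O : orbit 'P <[c]> x \subset O.
  apply/subsetP=> _ /orbitP [h hc <-] /=.
  by rewrite apermE (perm_closed _ (perm_on_cycle onc hc)).
have dvd_p : #|orbit 'P <[c]> x| %| p by rewrite card_orbit -oc dvdn_indexg.
have [/card_orbit1/setP/(_ (c x))|orb_nt] := eqVneq #|orbit 'P <[c]> x| 1%N.
  by rewrite inE (negbTE cx) (mem_orbit 'P x (cycle_id c)).
by apply/eqP; rewrite eqEcard sub_O card_O (elimT (prime_nt_dvdP p_pr orb_nt) dvd_p) /=.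
Qed.

Lemma cent_prime_cycle (c g : {perm T}) :
  perm_on O c -> perm_on O g -> #[c] = p -> commute g c -> g \in <[c]>.
Proof.
move=> onc ong oc cgc.
have c_nt : c != 1 by rewrite -order_gt1 oc prime_gt1.
have [x cx] := perm_moved c_nt.
have orbO := orbit_prime_cycle onc oc cx.
have : g x \in orbit 'P <[c]> x.
  by rewrite orbO (perm_closed _ ong) -orbO orbit_refl.
case/orbitP=> h hc; rewrite /= apermE => hx; suff -> : g = h by [].
apply/permP=> z; have [Oz|O'z] := boolP (z \in O); last first.
  by rewrite !(out_perm _ O'z) // (perm_on_cycle onc hc).
rewrite -orbO in Oz; case/orbitP: Oz => h' /cycleP [i ->] /= <-.
have cc : forall k, k \in <[c]> -> commute k (c ^+ i).
  by move=> k /cycleP [j ->]; apply: commuteX2.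
by rewrite -!permM -(commuteX i cgc) -(cc h hc) !permM hx.
Qed.
End PrimeCycle.

Section SmallNormalSubset.
Variables (T : finType) (O : {set T}) (p : nat).
Variables (X : {group {perm T}}) (S : {set {perm T}}).
Hypotheses (p_pr : prime p) (card_O : #|O| = p) (sXSym : X \subset perm.Sym O).
Hypotheses (p_dvd_X : p %| #|X|) (sSX : S \subset X) (S1 : 1 \in S).
Hypotheses (card_S : #|S| <= p) (nSX : {in S & X, forall s x, s ^ x \in S}).

Let perm_on_X x : x \in X -> perm_on O x.
Proof. by move/(subsetP sXSym); rewrite inE. Qed.

Lemma card_class_nt s : s \in S -> s != 1 -> 0 < #|s ^: X| < p.
Proof.
move=> Ss s_nt; rewrite card_gt0; apply/andP; split.
  by apply/set0Pn; exists s; apply: class_refl.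
have sub_S1 : s ^: X \subset S :\ 1.
  apply/subsetP=> _ /imsetP [x Xx ->]; rewrite !inE nSX // andbT.
  by apply: contra s_nt => /eqP/(canRL (conjgK x)); rewrite conj1g => ->.
apply: leq_ltn_trans (subset_leq_card sub_S1) _.
by move: card_S; rewrite (cardsD1 1 S) S1.
Qed.

Lemma cent1_eq_cycle s : s \in S -> s != 1 -> 'C_X[s] = <[s]> /\ #[s] = p.
Proof.
move=> Ss s_nt; have Xs := subsetP sSX s Ss.
have p_dvd_C : p %| #|'C_X[s]|.
  have /andP [class_gt0 class_lt] := card_class_nt Ss s_nt.
  have p'class : ~~ (p %| #|s ^: X|) by rewrite gtnNdvd.
  move: p_dvd_X; rewrite -(Lagrange (subsetIl X 'C[s])) index_cent1.
  by rewrite Euclid_dvdM // (negbTE p'class) orbF.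
have [c /setIP [Xc /cent1P csc] oc] := Cauchy p_pr p_dvd_C.
have s_c : s \in <[c]> :=
  cent_prime_cycle p_pr card_O (perm_on_X Xc) (perm_on_X Xs) oc (commute_sym csc).
have os : #[s] = p.
  have : #[s] %| p by rewrite -oc; apply: cardSg; rewrite cycle_subG.
  by case/primeP: p_pr => _ /[apply] /orP [|/eqP //]; rewrite order_eq1 (negbTE s_nt).
split=> //; apply/eqP; rewrite eqEsubset andbC subsetI !cycle_subG Xs cent1id /=.
apply/subsetP=> g /setIP [Xg /cent1P cgs].
exact (cent_prime_cycle p_pr card_O (perm_on_X Xs) (perm_on_X Xg) os cgs).
Qed.

Lemma Syl_eq_cycle s : s \in S -> s != 1 -> 'Syl_p(X) = [set <[s]>%G].
Proof.
move=> Ss s_nt; have Xs := subsetP sSX s Ss.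
have [cent_s os] := cent1_eq_cycle Ss s_nt.
have index_s : #|X : <[s]>| = #|s ^: X| by rewrite -cent_s index_cent1.
have /andP [class_gt0 class_lt] := card_class_nt Ss s_nt.
have syl_s : p.-Sylow(X) <[s]>.
  rewrite /pHall cycle_subG Xs /pgroup -orderE os pnat_id // index_s.
  by rewrite p'natE // gtnNdvd.
have nSyl_dvd : #|'Syl_p(X)| %| #|s ^: X|.
  by rewrite (card_Syl syl_s) -index_s indexgS // subsetI cycle_subG Xs normG.
have := card_Syl_mod X p_pr; rewrite modn_small; last first.
  exact: leq_ltn_trans (dvdn_leq class_gt0 nSyl_dvd) class_lt.
move/eqP/cards1P=> [P defSyl].
have : <[s]>%G \in 'Syl_p(X) by rewrite inE.
by rewrite defSyl inE => /eqP ->.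
Qed.

Lemma subset_cycle s : s \in S -> s != 1 -> S \subset <[s]>.
Proof.
move=> Ss s_nt; apply/subsetP=> t St.
have [-> | t_nt] := eqVneq t 1; first exact: group1.
have /set1_inj/(congr1 val)/= <- : [set <[t]>%G] = [set <[s]>%G].
  by rewrite -(Syl_eq_cycle Ss s_nt) (Syl_eq_cycle St t_nt).
exact: cycle_id.
Qed.

End SmallNormalSubset.

Section OrbitRestriction.
Variables (T : finType) (K : {group {perm T}}) (S : {set {perm T}}) (x : T) (p : nat).
Let O := orbit 'P K x.
Hypotheses (p_pr : prime p) (card_O : #|O| = p).
Hypotheses (sSK : S \subset K) (S1 : 1 \in S) (card_S : #|S| <= p).
Hypotheses (nSK : {in S & K, forall s k, s ^ k \in S}).
Hypothesis S_moves : exists2 s, s \in S & s x != x.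

Let nOK : K \subset 'N(O | 'P).
Proof. exact: acts_orbit (subsetT K). Qed.

Local Notation r := (restr_perm O).

Let p_dvd_restr : p %| #|r @* K|.
Proof.
rewrite card_morphim ker_restr_perm (setIidPr nOK) -card_O card_orbit indexgI.
by apply: indexgS; apply: astabS; rewrite sub1set orbit_refl.
Qed.

Lemma restr_orbit_cycle :
  exists2 c : {perm T}, #[c] = p & {in <<S>>, forall g, restr_perm O g \in <[c]>}.
Proof.
have nOS := subset_trans sSK nOK.
have sXSym : r @* K \subset perm.Sym O.
  by apply/subsetP=> _ /morphimP [k _ _ ->]; rewrite inE restr_perm_on.
have sSX : r @* S \subset r @* K := morphimS r sSK.
have S'1 : 1 \in r @* S by rewrite -(morph1 r) mem_morphim.
have card_S' : #|r @* S| <= p.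
  by rewrite (morphimEsub r nOS); apply: leq_trans (leq_imset_card _ _) card_S.
have nSX : {in r @* S & r @* K, forall s k, s ^ k \in r @* S}.
  move=> _ _ /morphimP [s nOs Ss ->] /morphimP [k nOk Kk ->].
  by rewrite -morphJ // mem_morphim ?groupJ ?nSK.
have [s Ss sx] := S_moves.
have rs_nt : r s != 1.
  apply: contra sx => /eqP rs1.
  by rewrite -(restr_permE (subsetP nOS s Ss) (orbit_refl _ K x)) rs1 perm1.
have rSs : r s \in r @* S by rewrite mem_morphim ?(subsetP nOS).
have [_ ors] := cent1_eq_cycle p_pr card_O sXSym p_dvd_restr sSX S'1 card_S' nSX rSs rs_nt.
have sS'rs := subset_cycle p_pr card_O sXSym p_dvd_restr sSX S'1 card_S' nSX rSs rs_nt.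
exists (r s) => // g Sg.
have : <<S>> \subset r @*^-1 <[r s]>.
  rewrite gen_subG; apply/subsetP=> t St; rewrite mem_morphpre ?(subsetP nOS) //.
  by rewrite (subsetP sS'rs) ?mem_morphim ?(subsetP nOS).
by move/subsetP/(_ g Sg)/morphpreP=> [].
Qed.

End OrbitRestriction.

Section ComplementaryRestrictions.
Variables (T : finType) (O : {set T}).

Definition restr_pair (g : {perm T}) := (restr_perm O g, restr_perm (~: O) g).

Lemma restr_pair_inj : {in 'N(O | 'P) &, injective restr_pair}.
Proof.
move=> g h nOg nOh [eqO eqCO]; apply/permP=> z.
have [Oz | O'z] := boolP (z \in O).
  by rewrite -(restr_permE nOg Oz) eqO restr_permE.
have CO'z : z \in ~: O by rewrite inE.
rewrite -astabsC in nOg nOh.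
by rewrite -(restr_permE nOg CO'z) eqCO restr_permE.
Qed.

Variables (p : nat) (A : {group {perm T}}) (c1 c2 : {perm T}).
Hypotheses (p_pr : prime p) (nOA : A \subset 'N(O | 'P)).
Hypotheses (oc1 : #[c1] = p) (oc2 : #[c2] = p).
Hypotheses (rA1 : {in A, forall g, restr_perm O g \in <[c1]>}).
Hypotheses (rA2 : {in A, forall g, restr_perm (~: O) g \in <[c2]>}).

Lemma restr_pair_cycles_abelem : p.-abelem A /\ #|A| <= p ^ 2.
Proof.
have nCA : A \subset 'N(~: O | 'P) by rewrite astabsC.
have inj_A : {in A &, injective restr_pair}.
  by move=> g h Ag Ah; apply: restr_pair_inj; rewrite ?(subsetP nOA).
have exp_cycle (c y : {perm T}) : #[c] = p -> y \in <[c]> -> y ^+ p = 1.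
  by move=> oc cy; rewrite -oc orderE expg_cardG.
have comm_cycle (c y z : {perm T}) : y \in <[c]> -> z \in <[c]> -> commute y z.
  by move=> cy cz; apply: (centsP (cycle_abelian c)).
split.
  apply/abelemP=> //; split=> [|g Ag].
    apply/centsP=> g Ag h Ah; apply: inj_A; rewrite ?groupM //.
    rewrite /restr_pair !morphM ?(subsetP nOA) ?(subsetP nCA) //.
    by rewrite (comm_cycle _ _ _ (rA1 Ag) (rA1 Ah)) (comm_cycle _ _ _ (rA2 Ag) (rA2 Ah)).
  apply: inj_A; rewrite ?groupX //.
  rewrite /restr_pair !morphX ?(subsetP nOA) ?(subsetP nCA) //.
  by rewrite (exp_cycle _ _ oc1 (rA1 Ag)) (exp_cycle _ _ oc2 (rA2 Ag)) !morph1.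
have sub_cycles : restr_pair @: A \subset setX <[c1]> <[c2]>.
  by apply/subsetP=> _ /imsetP [g Ag ->]; rewrite inE rA1 ?rA2.
rewrite -(card_in_imset inj_A) expnS expn1 -{1}oc1 -oc2 !orderE -cardsX.
exact: subset_leq_card sub_cycles.
Qed.

End ComplementaryRestrictions.

Section RightMultiplications.
Variables (L : finType) (op : L -> L -> L) (e : L).
Hypothesis loop_L : is_loop op e.

Lemma mul_ex x : op e x = x.
Proof. by case: loop_L => id_e _ _; case: (id_e x). Qed.

Lemma mul_xe x : op x e = x.
Proof. by case: loop_L => id_e _ _; case: (id_e x). Qed.

Let mulr_inj a : injective (fun x => op x a).
Proof. by case: loop_L. Qed.

Definition rmult_perm a : {perm L} := perm (@mulr_inj a).

Lemma rmult_permE a x : rmult_perm a x = op x a.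
Proof. by rewrite permE. Qed.

Lemma mem_rmult_perm a : rmult_perm a \in rmult_set op.
Proof. by rewrite inE; apply/existsP; exists a; apply/forallP=> x; rewrite rmult_permE. Qed.

Lemma rmult_setE t x : t \in rmult_set op -> t x = op x (t e).
Proof.
by rewrite inE => /existsP [a /forallP t_a]; rewrite (eqP (t_a x)) (eqP (t_a e)) mul_ex.
Qed.

Lemma rmult_set_inj : {in rmult_set op &, injective (fun t : {perm L} => t e)}.
Proof.
by move=> t u Tt Tu /= tu; apply/permP=> x; rewrite (rmult_setE x Tt) (rmult_setE x Tu) tu.
Qed.

Lemma rmult_perm_moves a x : a != e -> rmult_perm a x != x.
Proof.
apply: contra => /eqP; rewrite rmult_permE -{2}[x]mul_xe.
by case: loop_L => _ mull_inj _ /mull_inj ->.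
Qed.

Lemma rmult_set1 : 1 \in rmult_set op.
Proof.
suff -> : 1 = rmult_perm e by apply: mem_rmult_perm.
by apply/permP=> x; rewrite perm1 rmult_permE mul_xe.
Qed.

End RightMultiplications.

Section Envelope.
Variables (p : nat) (L : finType) (op : L -> L -> L) (e : L) (K : {group {perm L}}).
Hypotheses (p_pr : prime p) (loop_L : is_loop op e) (card_L : #|L| = (2 * p)%N).
Hypotheses (rcc_L : rcc op) (sHK : env_stab op e \subset K) (sKG : K \subset env_group op).
Hypotheses (iGK : #|env_group op : K| = 2) (iKH : #|K : env_stab op e| = p).

Local Notation G := (env_group op).
Local Notation H := (env_stab op e).
Local Notation T := (rmult_set op).
Local Notation O := (orbit 'P K e).

Lemma cent_orbit_e : 'C_K[e | 'P] = H.
Proof. by rewrite /env_stab /= -(setIidPl sKG) -setIA (setIidPr sHK). Qed.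

Lemma card_orbit_e : #|O| = p.
Proof. by rewrite card_orbit cent_orbit_e. Qed.

Lemma rmult_perm_orbit a : a \in O -> rmult_perm loop_L a \in K.
Proof.
case/orbitP=> k Kk /=; rewrite apermE => ka.
have Hk : rmult_perm loop_L a * k^-1 \in H.
  have Gt : rmult_perm loop_L a \in G := mem_gen (mem_rmult_perm loop_L a).
  rewrite inE groupM ?groupV ?(subsetP sKG k Kk) //=.
  by apply/astab1P; rewrite /= apermE permM rmult_permE (mul_ex loop_L) -ka permK.
by rewrite -(mulgKV k (rmult_perm loop_L a)) groupM // (subsetP sHK _ Hk).
Qed.

Lemma card_rmult_setI : #|T :&: K| <= p.
Proof.
rewrite -card_orbit_e -(card_in_imset (f := fun t : {perm L} => t e)); last first.
  by move=> t u /setIP [Tt _] /setIP [Tu _]; exact: (rmult_set_inj loop_L Tt Tu).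
by apply/subset_leq_card/subsetP=> _ /imsetP [t /setIP [_ Kt] ->]; apply: mem_orbit.
Qed.

Lemma rmult_setI_conj : {in T :&: K & K, forall s k, s ^ k \in T :&: K}.
Proof.
move=> s k /setIP [Ts Ks] Kk; rewrite inE groupJ // andbT.
exact: subsetP (rcc_L Ts) _ (memJ_class s (subsetP sKG k Kk)).
Qed.

Lemma rmult_setI_moves x : exists2 s, s \in T :&: K & s x != x.
Proof.
have := prime_gt1 p_pr; rewrite -card_orbit_e (cardsD1 e) orbit_refl add1n ltnS card_gt0.
case/set0Pn=> a; rewrite !inE => /andP [a_e Oa].
exists (rmult_perm loop_L a); first by rewrite inE mem_rmult_perm rmult_perm_orbit.
exact: rmult_perm_moves.
Qed.

Lemma card_orbit_e_compl : #|~: O| = p.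
Proof. by apply/eqP; rewrite -(eqn_add2l #|O|) cardsC card_L card_orbit_e mul2n addnn. Qed.

Lemma orbit_compl y : y \notin O -> orbit 'P K y = ~: O.
Proof.
move=> O'y; have sub_C : orbit 'P K y \subset ~: O.
  apply/subsetP=> z Ky_z; rewrite inE; apply: contra O'y => Oz.
  by rewrite -(orbit_transl _ Ky_z).
apply/eqP; rewrite eqEcard sub_C card_orbit_e_compl -card_orbit_e.
pose g := rmult_perm loop_L y.
have nKg : g \in 'N(K).
  exact: subsetP (normal_norm (index2_normal sKG iGK)) g (mem_gen (mem_rmult_perm loop_L y)).
have ge : g e = y by rewrite rmult_permE (mul_ex loop_L).
have gO : g @: O \subset orbit 'P K y.
  apply/subsetP=> _ /imsetP [z Oz ->].
  by have := orbit_conjsg 'P K g e z; rewrite (normP nKg) /= !apermE ge Oz.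
by rewrite -(card_imset O (@perm_inj _ g)) subset_leq_card.
Qed.

Lemma gen_rmult_setI_abelem : p.-abelem <<T :&: K>> /\ #|<<T :&: K>>| <= p ^ 2.
Proof.
have [y] : exists y, y \in ~: O.
  by apply/set0Pn; rewrite -card_gt0 card_orbit_e_compl prime_gt0.
rewrite inE => O'y.
have S1 : 1 \in T :&: K by rewrite inE (rmult_set1 loop_L) group1.
have restr_cycle := restr_orbit_cycle p_pr _ (subsetIr T K) S1
  card_rmult_setI rmult_setI_conj (rmult_setI_moves _).
have [c1 oc1 rK1] := restr_cycle e card_orbit_e.
have card_Oy : #|orbit 'P K y| = p by rewrite orbit_compl // card_orbit_e_compl.
have [c2 oc2] := restr_cycle y card_Oy.
rewrite orbit_compl // => rK2.
have nOK1 : <<T :&: K>> \subset 'N(O | 'P).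
  by rewrite gen_subG (subset_trans (subsetIr T K)) ?acts_orbit ?subsetT.
exact: restr_pair_cycles_abelem p_pr nOK1 oc1 oc2 rK1 rK2.
Qed.

Lemma card_gen_rmult_setI : #|<<T :&: K>>| = (p * #|H :&: <<T :&: K>>|)%N.
Proof.
have sK1K : <<T :&: K>> \subset K by rewrite gen_subG subsetIr.
have orbit_K1 : orbit 'P <<T :&: K>> e = O.
  have sub_O : orbit 'P <<T :&: K>> e \subset O by rewrite !orbitE imsetS.
  apply/eqP; rewrite eqEsubset sub_O; apply/subsetP=> a Oa; apply/orbitP.
  exists (rmult_perm loop_L a); last by rewrite /= apermE rmult_permE (mul_ex loop_L).
  by rewrite mem_gen // inE mem_rmult_perm rmult_perm_orbit.
have cent_K1 : 'C_(<<T :&: K>>)[e | 'P] = H :&: <<T :&: K>>.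
  by rewrite [RHS]setIC /env_stab /= setIA (setIidPl (subset_trans sK1K sKG)).
by rewrite -(card_orbit_stab 'P _ e) orbit_K1 cent_K1 card_orbit_e.
Qed.

End Envelope.


Theorem corollary5p3 (p : nat) (L : finType) (op : L -> L -> L) (e : L) :
  prime p -> odd p ->
  is_loop op e -> #|L| = (2 * p)%N -> rcc op ->
  forall K : {group {perm L}},
    env_stab op e \proper K -> K \proper env_group op ->
    #|env_group op : K| = 2 -> #|K : env_stab op e| = p ->
    let K1 := <<rmult_set op :&: K>> in
    let H1 := env_stab op e :&: K1 in
    (#|H1| = 1%N \/ #|H1| = p) /\
    p.-abelem K1 /\ (#|K1| = p \/ #|K1| = (p ^ 2)%N).
Proof.
move=> p_pr _ loop_L card_L rcc_L K /proper_sub sHK /proper_sub sKG iGK iKH K1 H1.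
have [abelK1 card_K1_le] := gen_rmult_setI_abelem p_pr loop_L card_L rcc_L sHK sKG iGK iKH.
have card_K1 : #|K1| = (p * #|H1|)%N := card_gen_rmult_setI loop_L sHK sKG iKH.
have pH1 : p.-group H1 := pgroupS (subsetIr _ _) (abelem_pgroup abelK1).
have card_H1_le : #|H1| <= p.
  by rewrite -(leq_pmul2l (prime_gt0 p_pr)) -card_K1 mulnn.
have [H1_1 | H1_p] := pnat_le_prime p_pr pH1 card_H1_le.
  by split; [left | split=> //; left; rewrite card_K1 H1_1 muln1].
by split; [right | split=> //; right; rewrite card_K1 H1_p mulnn].
Qed.
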